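(* Let $S>0$ and $\xi<0$, and define for $x>0$ \[ f(x)=N\!\left(\xi+\frac1S\ln x\right)-x^{-\frac{2\xi}{S}}N\!\left(\xi-\frac1S\ln x\right). \] Then there exists $\varepsilon>0$ such that $f(x)<0$ and $f'(x)<0$ for all $x\in(0,\varepsilon)$. Moreover, if $-S/2<\xi<0$ then $\lim_{x\to0^+}f'(x)=-\infty$; if $\xi=-S/2$ then $\lim_{x\to0^+}f'(x)=-1$; and if $\xi<-S/2$ then $\lim_{x\to0^+}f'(x)=0$.
   Context: $N(x)=\frac{1}{\sqrt{2\pi}}\int_{-\infty}^{x}e^{-s^2/2}\,ds$ is the standard normal distribution function. *)

From Stdlib Require Import Reals.
From Coquelicot Require Import Coquelicot.
Open Scope R_scope.

Definition Ncdf (x : R) : R :=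
  / sqrt (2 * PI) * RInt_gen (fun s => exp (- s ^ 2 / 2)) (Rbar_locally m_infty) (at_point x).

Definition fpaper (S xi : R) (x : R) : R :=
  Ncdf (xi + / S * ln x) - Rpower x (- (2 * xi) / S) * Ncdf (xi - / S * ln x).

From Stdlib Require Import Reals Lra Lia.
From Coquelicot Require Import Coquelicot.
Open Scope R_scope.

(* Write N(y) = 1/2 + G(y)/sqrt(2 pi) with G(y) the integral of exp(-s^2/2) over [0, y].
   The value G(+oo) = sqrt(pi/2) comes from the classical identity
   G(t)^2 + 2 int_0^1 exp(-t^2 (1+u^2)/2) / (1+u^2) du = pi/2: the left side has derivative 0,
   equals 2 atan 1 at t = 0, and its integral term vanishes as t -> +oo.

   In the variable L = ln x, f = F o ln with F(L) = N(xi + L/S) - exp(p L) N(xi - L/S) and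
   p = -2 xi/S (F = fpaper_log, p = expo, g = Dfpaper_factor below). Since
   exp(p L) exp(-(xi - L/S)^2/2) = exp(-(xi + L/S)^2/2), the two Gaussian terms of f' combine
   and f'(x) = x^(p-1) g(ln x) with g(L) = 2/(S sqrt(2 pi)) exp(-(xi - L/S)^2/2) - p N(xi - L/S).
   As L -> -oo, g(L) -> -p < 0 and F(L) -> 0; so f decreases strictly near 0+ towards the limit 0,
   hence is negative there, and f'(x) behaves like -p x^(p-1), whose limit is -oo, -1 or 0
   according as p < 1, p = 1 or p > 1. *)

Definition gauss (s : R) : R := exp (- s ^ 2 / 2).
Definition gauss_int (y : R) : R := RInt gauss 0 y.

Lemma gauss_pos s : 0 < gauss s.
Proof. apply exp_pos. Qed.

Lemma continuous_gauss s : continuous gauss s.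
Proof. apply (ex_derive_continuous gauss); unfold gauss; auto_derive; auto. Qed.

Lemma ex_RInt_gauss a b : ex_RInt gauss a b.
Proof. apply (ex_RInt_continuous (V := R_CompleteNormedModule)); auto using continuous_gauss. Qed.

Lemma is_derive_gauss_int (y : R) : is_derive gauss_int y (gauss y).
Proof.
  apply is_derive_RInt with (a := 0); [|apply continuous_gauss].
  apply filter_forall; intros.
  apply (RInt_correct (V := R_CompleteNormedModule)), ex_RInt_gauss.
Qed.

Lemma gauss_int_ge0 y : 0 <= y -> 0 <= gauss_int y.
Proof.
  intros hy; apply RInt_ge_0; auto using ex_RInt_gauss.
  intros; left; apply gauss_pos.
Qed.

Lemma gauss_int_opp y : gauss_int (- y) = - gauss_int y.
Proof.
  unfold gauss_int.
  pose proof (RInt_comp_lin gauss (-1) 0 0 y) as H.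
  replace (-1 * 0 + 0) with 0 in H by ring; replace (-1 * y + 0) with (- y) in H by ring.
  rewrite <- H by apply ex_RInt_gauss.
  rewrite <- (RInt_opp (V := R_CompleteNormedModule)) by apply ex_RInt_gauss.
  apply RInt_ext; intros s _.
  change (-1 * gauss (-1 * s + 0) = - gauss s).
  unfold gauss; replace ((-1 * s + 0) ^ 2) with (s ^ 2) by ring; ring.
Qed.

Definition gauss_kernel (t u : R) : R := exp (- (t ^ 2 * (1 + u ^ 2)) / 2) / (1 + u ^ 2).
Definition gauss_aux (t : R) : R := RInt (gauss_kernel t) 0 1.

Lemma one_add_sqr_pos u : 0 < 1 + u ^ 2.
Proof. nra. Qed.

Lemma is_derive_gauss_kernel (u t : R) :
  is_derive (fun z => gauss_kernel z u) t (- t * exp (- (t ^ 2 * (1 + u ^ 2)) / 2)).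
Proof.
  pose proof (one_add_sqr_pos u).
  unfold gauss_kernel; auto_derive; [lra|].
  replace (- (t * (t * 1) * (1 + u * (u * 1))) * / 2) with (- (t ^ 2 * (1 + u ^ 2)) / 2)
    by (unfold Rdiv; ring).
  field; lra.
Qed.

Lemma continuity_2d_pt_Derive_gauss_kernel t u :
  continuity_2d_pt (fun z v => Derive (fun w => gauss_kernel w v) z) t u.
Proof.
  apply continuity_2d_pt_ext with (f := fun z v => - z * exp ((z * z) * (1 + v * v) * (- / 2))).
  { intros z v; erewrite is_derive_unique by apply is_derive_gauss_kernel.
    f_equal; f_equal; field. }
  apply continuity_2d_pt_mult.
  - apply continuity_2d_pt_opp, continuity_2d_pt_id1.
  - apply continuity_1d_2d_pt_comp with (f := exp).
    { apply derivable_continuous_pt, derivable_pt_exp. }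
    repeat first [ apply continuity_2d_pt_mult | apply continuity_2d_pt_plus
                 | apply continuity_2d_pt_id1 | apply continuity_2d_pt_id2
                 | apply continuity_2d_pt_const ].
Qed.

Lemma ex_RInt_gauss_kernel t a b : ex_RInt (gauss_kernel t) a b.
Proof.
  apply (ex_RInt_continuous (V := R_CompleteNormedModule)); intros u _.
  pose proof (one_add_sqr_pos u).
  apply (ex_derive_continuous (gauss_kernel t)); unfold gauss_kernel; auto_derive; lra.
Qed.

Lemma is_derive_gauss_aux (t : R) : is_derive gauss_aux t (- gauss t * gauss_int t).
Proof.
  replace (- gauss t * gauss_int t) with (RInt (fun u => Derive (fun z => gauss_kernel z u) t) 0 1).
  { apply is_derive_RInt_param.
    - apply filter_forall; intros z u _; eexists; apply is_derive_gauss_kernel.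
    - intros u _; apply continuity_2d_pt_Derive_gauss_kernel.
    - apply filter_forall; intros; apply ex_RInt_gauss_kernel. }
  rewrite (RInt_ext _ (fun u => scal (- gauss t) (scal t (gauss (t * u + 0))))).
  { rewrite (RInt_scal (V := R_CompleteNormedModule)).
    - rewrite (RInt_comp_lin (V := R_CompleteNormedModule)) by apply ex_RInt_gauss.
      replace (t * 0 + 0) with 0 by ring; replace (t * 1 + 0) with t by ring; reflexivity.
    - apply (ex_RInt_comp_lin (V := R_CompleteNormedModule)), ex_RInt_gauss. }
  intros u _; erewrite is_derive_unique by apply is_derive_gauss_kernel.
  change (- t * exp (- (t ^ 2 * (1 + u ^ 2)) / 2) = - gauss t * (t * gauss (t * u + 0))).
  unfold gauss; replace (- (t ^ 2 * (1 + u ^ 2)) / 2) with (- t ^ 2 / 2 + - (t * u + 0) ^ 2 / 2)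
    by field.
  rewrite exp_plus; ring.
Qed.

Lemma gauss_aux_0 : gauss_aux 0 = PI / 4.
Proof.
  unfold gauss_aux; rewrite (RInt_ext _ (fun u => / (1 + u ^ 2))).
  - rewrite (is_RInt_unique (V := R_CompleteNormedModule) _ _ _ (atan 1 - atan 0)).
    { rewrite atan_1, atan_0; ring. }
    apply (is_RInt_derive (V := R_CompleteNormedModule) atan); intros u _.
    + apply is_derive_Reals, derivable_pt_lim_atan.
    + pose proof (one_add_sqr_pos u).
      apply (ex_derive_continuous (fun u => / (1 + u ^ 2))); auto_derive; lra.
  - intros u _; unfold gauss_kernel.
    rewrite pow_i, Rmult_0_l, Ropp_0, Rdiv_0_l, exp_0 by lia.
    apply Rmult_1_l.
Qed.

Lemma gauss_int_sq_add_aux t : gauss_int t ^ 2 + 2 * gauss_aux t = PI / 2.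
Proof.
  set (F z := gauss_int z ^ 2 + 2 * gauss_aux z).
  assert (dF : forall z : R, is_derive F z zero).
  { intros z; unfold F; auto_derive.
    - split; [|split; [|trivial]]; eexists;
        [apply is_derive_gauss_int | apply is_derive_gauss_aux].
    - rewrite (is_derive_unique (fun x : R => gauss_int x) z _ (is_derive_gauss_int z)),
        (is_derive_unique (fun x : R => gauss_aux x) z _ (is_derive_gauss_aux z)).
      change zero with 0; ring. }
  assert (F0 : F 0 = PI / 2).
  { unfold F, gauss_int; rewrite RInt_point, gauss_aux_0; change zero with 0; field. }
  rewrite <- F0; change (F t = F 0).
  destruct (Rtotal_order t 0) as [h | [-> | h]].
  - apply eq_is_derive; auto.
  - reflexivity.
  - symmetry; apply eq_is_derive; auto.
Qed.

Lemma gauss_aux_bounds t : 0 <= gauss_aux t <= gauss t.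
Proof.
  assert (kernel_bounds : forall u, 0 <= gauss_kernel t u <= gauss t).
  { intros u; pose proof (one_add_sqr_pos u).
    pose proof (exp_pos (- (t ^ 2 * (1 + u ^ 2)) / 2)).
    unfold gauss_kernel, gauss; split.
    - apply Rlt_le, Rdiv_lt_0_compat; assumption.
    - apply Rle_trans with (exp (- (t ^ 2 * (1 + u ^ 2)) / 2)).
      + apply Rmult_le_reg_r with (1 + u ^ 2); [assumption|].
        field_simplify; nra.
      + destruct (Req_dec (t * u) 0) as [htu | htu].
        * right; f_equal; nra.
        * left; apply exp_increasing; nra. }
  split.
  - apply RInt_ge_0; [lra | apply ex_RInt_gauss_kernel | intros; apply kernel_bounds].
  - apply Rle_trans with (RInt (fun _ => gauss t) 0 1).
    + apply RInt_le; [lra | apply ex_RInt_gauss_kernel | apply ex_RInt_const |].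
      intros; apply kernel_bounds.
    + right; rewrite (RInt_const (V := R_CompleteNormedModule)).
      change ((1 - 0) * gauss t = gauss t); ring.
Qed.

Lemma is_lim_gauss : is_lim gauss p_infty 0.
Proof.
  apply (filterlim_comp _ _ _ (fun s => - s ^ 2 / 2) exp _ (Rbar_locally m_infty));
    [| exact is_lim_exp_m].
  intros P [M HM]; exists (Rabs M + 2); intros s hs; apply HM.
  pose proof (Rabs_maj2 M); pose proof (Rabs_pos M).
  assert (s ^ 2 >= 2 * s) by nra; lra.
Qed.

Lemma is_lim_gauss_aux : is_lim gauss_aux p_infty 0.
Proof.
  apply (filterlim_le_le (fun _ => 0) gauss_aux gauss).
  - apply filter_forall, gauss_aux_bounds.
  - apply is_lim_const.
  - exact is_lim_gauss.
Qed.

Lemma is_lim_gauss_int : is_lim gauss_int p_infty (sqrt (PI / 2)).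
Proof.
  apply is_lim_ext_loc with (fun t => sqrt (PI / 2 - 2 * gauss_aux t)).
  { exists 0; intros t ht.
    rewrite <- (gauss_int_sq_add_aux t); replace (_ + _ - _) with (gauss_int t ^ 2) by ring.
    apply sqrt_pow2, gauss_int_ge0; lra. }
  apply (filterlim_comp _ _ _ (fun t => PI / 2 - 2 * gauss_aux t) sqrt _ (Rbar_locally (PI / 2))).
  - eapply is_lim_minus; [apply is_lim_const | apply is_lim_scal_l, is_lim_gauss_aux |].
    unfold is_Rbar_minus, is_Rbar_plus; cbn; do 2 f_equal; ring.
  - apply continuity_pt_filterlim, continuity_pt_sqrt; pose proof PI_RGT_0; lra.
Qed.

Lemma is_lim_gauss_int_m_infty : is_lim gauss_int m_infty (- sqrt (PI / 2)).
Proof.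
  apply is_lim_ext with (fun t => - gauss_int (- t)).
  { intros t; rewrite gauss_int_opp; ring. }
  apply (is_lim_opp (fun t => gauss_int (- t)) m_infty (sqrt (PI / 2))).
  apply (filterlim_comp _ _ _ Ropp gauss_int _ (Rbar_locally p_infty)); [|exact is_lim_gauss_int].
  apply (is_lim_opp (fun t => t) m_infty m_infty), is_lim_id.
Qed.

Lemma RInt_gen_gauss y :
  RInt_gen gauss (Rbar_locally m_infty) (at_point y) = gauss_int y + sqrt (PI / 2).
Proof.
  apply (is_RInt_gen_unique (V := R_CompleteNormedModule)).
  replace (gauss_int y + sqrt (PI / 2)) with (gauss_int y - - sqrt (PI / 2)) by ring.
  apply (is_RInt_gen_ext (Derive gauss_int)).
  { apply filter_forall; intros [a b] s _; apply is_derive_unique, is_derive_gauss_int. }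
  apply is_RInt_gen_Derive.
  - apply filter_forall; intros; eexists; apply is_derive_gauss_int.
  - apply filter_forall; intros [a b] s _.
    apply continuous_ext with gauss; [|apply continuous_gauss].
    intros; symmetry; apply is_derive_unique, is_derive_gauss_int.
  - exact is_lim_gauss_int_m_infty.
  - intros P HP; apply locally_singleton in HP; exact HP.
Qed.

Lemma Rinv_sqrt_2PI_mul_sqrt_PI_half : / sqrt (2 * PI) * sqrt (PI / 2) = / 2.
Proof.
  pose proof PI_RGT_0.
  assert (sqrt (PI / 2) > 0) by (apply sqrt_lt_R0; lra).
  replace (2 * PI) with (2 ^ 2 * (PI / 2)) by field.
  rewrite sqrt_mult_alt, sqrt_pow2 by lra; field; lra.
Qed.

Lemma Ncdf_gauss_int y : Ncdf y = / 2 + / sqrt (2 * PI) * gauss_int y.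
Proof.
  unfold Ncdf; rewrite RInt_gen_gauss, Rmult_plus_distr_l, Rinv_sqrt_2PI_mul_sqrt_PI_half; ring.
Qed.

Lemma is_derive_Ncdf (y : R) : is_derive Ncdf y (/ sqrt (2 * PI) * gauss y).
Proof.
  apply is_derive_ext with (fun z => / 2 + / sqrt (2 * PI) * gauss_int z).
  { intros; symmetry; apply Ncdf_gauss_int. }
  auto_derive; [eexists; apply is_derive_gauss_int |].
  rewrite (is_derive_unique (fun x : R => gauss_int x) y _ (is_derive_gauss_int y)); ring.
Qed.

Lemma is_lim_Ncdf_p_infty : is_lim Ncdf p_infty 1.
Proof.
  apply is_lim_ext with (fun y => / 2 + / sqrt (2 * PI) * gauss_int y).
  { intros; symmetry; apply Ncdf_gauss_int. }
  eapply is_lim_plus; [apply is_lim_const | apply is_lim_scal_l, is_lim_gauss_int |].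
  unfold is_Rbar_plus; cbn; rewrite Rinv_sqrt_2PI_mul_sqrt_PI_half; do 2 f_equal; field.
Qed.

Lemma is_lim_Ncdf_m_infty : is_lim Ncdf m_infty 0.
Proof.
  apply is_lim_ext with (fun y => / 2 + / sqrt (2 * PI) * gauss_int y).
  { intros; symmetry; apply Ncdf_gauss_int. }
  eapply is_lim_plus; [apply is_lim_const | apply is_lim_scal_l, is_lim_gauss_int_m_infty |].
  unfold is_Rbar_plus; cbn; rewrite Ropp_mult_distr_r_reverse, Rinv_sqrt_2PI_mul_sqrt_PI_half.
  do 2 f_equal; field.
Qed.

Lemma is_lim_affine_m_infty_pos b k : 0 < k -> is_lim (fun L => b + k * L) m_infty m_infty.
Proof.
  intros hk P [M HM]; exists ((M - b) / k); intros L hL; apply HM.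
  apply (Rmult_lt_compat_r k) in hL; [|lra].
  replace ((M - b) / k * k) with (M - b) in hL by (field; lra); lra.
Qed.

Lemma is_lim_affine_m_infty_neg b k : k < 0 -> is_lim (fun L => b + k * L) m_infty p_infty.
Proof.
  intros hk P [M HM]; exists ((M - b) / k); intros L hL; apply HM.
  apply (Rmult_lt_compat_r (- k)) in hL; [|lra].
  replace ((M - b) / k * - k) with (b - M) in hL by (field; lra); lra.
Qed.

Lemma is_lim_exp_scal_m_infty_pos k : 0 < k -> is_lim (fun L => exp (k * L)) m_infty 0.
Proof.
  intros hk; apply is_lim_ext with (fun L => exp (0 + k * L)); [intros; f_equal; ring|].
  exact (filterlim_comp _ _ _ _ exp _ _ _ (is_lim_affine_m_infty_pos 0 k hk) is_lim_exp_m).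
Qed.

Lemma is_lim_exp_scal_m_infty_neg k : k < 0 -> is_lim (fun L => exp (k * L)) m_infty p_infty.
Proof.
  intros hk; apply is_lim_ext with (fun L => exp (0 + k * L)); [intros; f_equal; ring|].
  exact (filterlim_comp _ _ _ _ exp _ _ _ (is_lim_affine_m_infty_neg 0 k hk) is_lim_exp_p).
Qed.

Lemma filterlim_at_right_0_of_ln (h F : R -> R) (l : Rbar) :
  (forall x, 0 < x -> h x = F (ln x)) -> is_lim F m_infty l ->
  filterlim h (at_right 0) (Rbar_locally l).
Proof.
  intros hF hlim.
  apply filterlim_ext_loc with (fun x => F (ln x)).
  { exists (mkposreal 1 Rlt_0_1); intros x _ hx; symmetry; apply hF, hx. }
  exact (filterlim_comp _ _ _ ln F _ _ _ is_lim_ln_0 hlim).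
Qed.

Lemma decreasing_of_is_derive_neg (f df : R -> R) (a b : R) :
  (forall x, a < x < b -> is_derive f x (df x) /\ df x < 0) ->
  forall s t, a < s < t -> t < b -> f t < f s.
Proof.
  intros hdf s t hst htb.
  destruct (MVT_gen f s t df) as [c [hc hmvt]];
    rewrite Rmin_left, Rmax_right in * by lra.
  - intros x hx; apply hdf; lra.
  - intros x hx; apply continuity_pt_filterlim, (ex_derive_continuous f).
    eexists; apply hdf; lra.
  - assert (df c < 0) by (apply hdf; lra); nra.
Qed.

Lemma neg_of_decreasing_at_right_0 (f : R -> R) (b : R) :
  filterlim f (at_right 0) (locally 0) ->
  (forall s t, 0 < s < t -> t < b -> f t < f s) ->
  forall x, 0 < x < b -> f x < 0.
Proof.
  intros hlim hdec x hx.
  assert (f (x / 2) <= 0).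
  { apply (closed_filterlim_loc f (fun z => f (x / 2) <= z) 0 hlim); [|apply closed_ge].
    assert (hx2 : 0 < x / 2) by lra.
    exists (mkposreal _ hx2); intros t ht tpos; apply Rlt_le, hdec; [|lra].
    change (Rabs (t - 0) < x / 2) in ht; apply Rabs_def2 in ht; lra. }
  assert (f x < f (x / 2)) by (apply hdec; lra).
  lra.
Qed.

Section LogarithmicScale.

Variables S xi : R.
Hypothesis S_pos : 0 < S.
Hypothesis xi_neg : xi < 0.

Definition expo : R := - (2 * xi) / S.

Definition fpaper_log (L : R) : R :=
  Ncdf (xi + / S * L) - exp (expo * L) * Ncdf (xi - / S * L).

Definition Dfpaper_factor (L : R) : R :=
  2 / S * / sqrt (2 * PI) * gauss (xi - / S * L) - expo * Ncdf (xi - / S * L).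

Definition Dfpaper_log (L : R) : R := exp ((expo - 1) * L) * Dfpaper_factor L.

Lemma expo_pos : 0 < expo.
Proof. unfold expo; apply Rdiv_lt_0_compat; lra. Qed.

Lemma exp_expo_mul_gauss L : exp (expo * L) * gauss (xi - / S * L) = gauss (xi + / S * L).
Proof. unfold gauss, expo; rewrite <- exp_plus; f_equal; field; lra. Qed.

Lemma is_derive_fpaper (x : R) : 0 < x -> is_derive (fpaper S xi) x (Dfpaper_log (ln x)).
Proof.
  intros hx; unfold fpaper, Rpower.
  auto_derive.
  { repeat split; auto; eexists; apply is_derive_Ncdf. }
  rewrite !(is_derive_unique (fun z : R => Ncdf z) _ _ (is_derive_Ncdf _)).
  assert (inv_x : / x = exp (- ln x)) by (rewrite exp_Ropp, exp_ln; auto).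
  rewrite inv_x, <- exp_expo_mul_gauss.
  unfold Dfpaper_log, Dfpaper_factor.
  replace ((expo - 1) * ln x) with (expo * ln x + - ln x) by ring.
  rewrite exp_plus; unfold expo, Rminus, Rdiv; ring.
Qed.

Lemma is_lim_xi_sub_m_infty : is_lim (fun L => xi - / S * L) m_infty p_infty.
Proof.
  apply is_lim_ext with (fun L => xi + - / S * L); [intros; ring|].
  apply is_lim_affine_m_infty_neg; pose proof (Rinv_0_lt_compat S S_pos); lra.
Qed.

Lemma is_lim_xi_add_m_infty : is_lim (fun L => xi + / S * L) m_infty m_infty.
Proof. apply is_lim_affine_m_infty_pos, Rinv_0_lt_compat, S_pos. Qed.

Lemma is_lim_fpaper_log : is_lim fpaper_log m_infty 0.
Proof.
  eapply is_lim_minus.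
  - exact (filterlim_comp _ _ _ _ Ncdf _ _ _ is_lim_xi_add_m_infty is_lim_Ncdf_m_infty).
  - eapply is_lim_mult.
    + apply is_lim_exp_scal_m_infty_pos, expo_pos.
    + exact (filterlim_comp _ _ _ _ Ncdf _ _ _ is_lim_xi_sub_m_infty is_lim_Ncdf_p_infty).
    + exact I.
  - unfold is_Rbar_minus, is_Rbar_plus; cbn; do 2 f_equal; ring.
Qed.

Lemma is_lim_Dfpaper_factor : is_lim Dfpaper_factor m_infty (- expo).
Proof.
  eapply is_lim_minus.
  - apply is_lim_scal_l.
    exact (filterlim_comp _ _ _ _ gauss _ _ _ is_lim_xi_sub_m_infty is_lim_gauss).
  - apply is_lim_scal_l.
    exact (filterlim_comp _ _ _ _ Ncdf _ _ _ is_lim_xi_sub_m_infty is_lim_Ncdf_p_infty).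
  - unfold is_Rbar_minus, is_Rbar_plus; cbn; do 2 f_equal; ring.
Qed.

Lemma Dfpaper_log_eventually_neg : exists M, forall L, L < M -> Dfpaper_log L < 0.
Proof.
  destruct (is_lim_Dfpaper_factor (fun y => y < 0)) as [M HM].
  { exists (mkposreal _ expo_pos); intros y hy.
    change (Rabs (y - - expo) < expo) in hy; apply Rabs_def2 in hy; lra. }
  exists M; intros L hL; unfold Dfpaper_log.
  pose proof (exp_pos ((expo - 1) * L)); pose proof (HM L hL); nra.
Qed.

Lemma is_lim_Dfpaper_log_gt : - S / 2 < xi -> is_lim Dfpaper_log m_infty m_infty.
Proof.
  intros hxi.
  assert (expo < 1) by (unfold expo; apply Rmult_lt_reg_r with S; [lra | field_simplify; lra]).
  pose proof expo_pos.
  assert (E : Rbar_mult p_infty (- expo) = m_infty)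
    by (apply is_Rbar_mult_unique, is_Rbar_mult_p_infty_neg; cbn; lra).
  rewrite <- E at 2.
  apply is_lim_mult; [apply is_lim_exp_scal_m_infty_neg; lra | apply is_lim_Dfpaper_factor |].
  cbn; lra.
Qed.

Lemma is_lim_Dfpaper_log_eq : xi = - S / 2 -> is_lim Dfpaper_log m_infty (-1).
Proof.
  intros hxi.
  assert (expo_1 : expo = 1) by (unfold expo; rewrite hxi; field; lra).
  apply is_lim_ext with Dfpaper_factor.
  { intros L; unfold Dfpaper_log; rewrite expo_1, Rminus_diag, Rmult_0_l, exp_0; ring. }
  replace (-1) with (- expo) by (rewrite expo_1; ring); apply is_lim_Dfpaper_factor.
Qed.

Lemma is_lim_Dfpaper_log_lt : xi < - S / 2 -> is_lim Dfpaper_log m_infty 0.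
Proof.
  intros hxi.
  assert (1 < expo) by (unfold expo; apply Rmult_lt_reg_r with S; [lra | field_simplify; lra]).
  replace (Finite 0) with (Rbar_mult 0 (- expo)) by (cbn; f_equal; ring).
  apply is_lim_mult; [apply is_lim_exp_scal_m_infty_pos; lra | apply is_lim_Dfpaper_factor |].
  exact I.
Qed.

End LogarithmicScale.

Theorem lemma1 (S xi : R) (hS : 0 < S) (hxi : xi < 0) :
  (exists eps : R, 0 < eps /\
     forall x : R, 0 < x < eps ->
       fpaper S xi x < 0 /\ ex_derive (fpaper S xi) x /\ Derive (fpaper S xi) x < 0)
  /\ (- S / 2 < xi ->
        filterlim (Derive (fpaper S xi)) (at_right 0) (Rbar_locally m_infty))
  /\ (xi = - S / 2 ->
        filterlim (Derive (fpaper S xi)) (at_right 0) (Rbar_locally (Finite (-1))))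
  /\ (xi < - S / 2 ->
        filterlim (Derive (fpaper S xi)) (at_right 0) (Rbar_locally (Finite 0))).
Proof.
  assert (Derive_lim : forall l, is_lim (Dfpaper_log S xi) m_infty l ->
            filterlim (Derive (fpaper S xi)) (at_right 0) (Rbar_locally l)).
  { intros l; apply filterlim_at_right_0_of_ln; intros x hx.
    apply is_derive_unique, is_derive_fpaper; assumption. }
  destruct (Dfpaper_log_eventually_neg S xi hS hxi) as [M HM].
  assert (deriv_neg : forall x, 0 < x < exp M ->
            is_derive (fpaper S xi) x (Dfpaper_log S xi (ln x)) /\ Dfpaper_log S xi (ln x) < 0).
  { intros x hx; split; [apply is_derive_fpaper; lra|].
    apply HM; rewrite <- (ln_exp M); apply ln_increasing; lra. }
  split; [|split; [|split]].
  - exists (exp M); split; [apply exp_pos|]; intros x hx; split; [|split].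
    + apply (neg_of_decreasing_at_right_0 _ (exp M)); [| |assumption].
      * apply (filterlim_at_right_0_of_ln _ (fpaper_log S xi) 0); [reflexivity|].
        apply is_lim_fpaper_log; assumption.
      * apply (decreasing_of_is_derive_neg _ (fun x => Dfpaper_log S xi (ln x)) 0), deriv_neg.
    + eexists; apply deriv_neg, hx.
    + rewrite (is_derive_unique _ _ _ (proj1 (deriv_neg x hx))); apply deriv_neg, hx.
  - intros h; apply Derive_lim, is_lim_Dfpaper_log_gt; assumption.
  - intros h; apply Derive_lim, is_lim_Dfpaper_log_eq; assumption.
  - intros h; apply Derive_lim, is_lim_Dfpaper_log_lt; assumption.
Qed.
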